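(* Let $T$ be a finite tree and $G=T^2$ its square. Then $G$ is co-chordal (i.e. its complement $G^c$ is chordal) if and only if $T$ is one of: (i) the path $L_n$ with $2\le n\le 5$; (ii) a star graph; (iii) a (partially) whiskered star.
   Context: All graphs are finite and simple. For a graph $G$, the square $G^2$ is the graph on $V(G)$ whose edges are the pairs $\{x,y\}$ with $x\neq y$ and $\mathrm{dist}_G(x,y)\in\{1,2\}$. $G^c$ is the graph on $V(G)$ whose edges are the non-edges of $G$. A graph is chordal if it has no induced cycle of length $\ge4$. $L_n$ denotes the path on $n$ vertices. A star graph is $K_{1,t}$ ($t\ge1$). A (partially) whiskered star is the tree with vertex set $\{x_0,x_1,\dots,x_n,y_1,\dots,y_m\}$, where $n\ge1$ and $1\le m\le n$, and edge set $\{\{x_0,x_i\}:1\le i\le n\}\cup\{\{x_i,y_i\}:1\le i\le m\}$. *)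

From mathcomp Require Import all_boot.
Set Implicit Arguments. Unset Strict Implicit. Unset Printing Implicit Defensive.

Section Graphs.
Variable T : finType.

Definition simple_graph (e : rel T) : Prop := symmetric e /\ irreflexive e.

Definition connected (e : rel T) : Prop := forall x y : T, connect e x y.

Definition acyclic (e : rel T) : Prop :=
  forall c : seq T, uniq c -> 3 <= size c -> ~~ cycle e c.

Definition is_tree (e : rel T) : Prop := simple_graph e /\ connected e /\ acyclic e.

Definition square (e : rel T) : rel T :=
  fun x y => (x != y) && (e x y || [exists z, e x z && e z y]).

Definition compl (h : rel T) : rel T := fun x y => (x != y) && ~~ h x y.

Definition induced_cycle (h : rel T) (x0 : T) (c : seq T) : Prop :=
  [/\ uniq c, 4 <= size c &
   forall i j, i < size c -> j < size c ->
     h (nth x0 c i) (nth x0 c j) =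
     (j == (i + 1) %% size c) || (i == (j + 1) %% size c)].

Definition chordal (h : rel T) : Prop :=
  forall (x0 : T) (c : seq T), ~ induced_cycle h x0 c.

End Graphs.

Definition isomorphic (T U : finType) (e : rel T) (f : rel U) : Prop :=
  exists phi : T -> U, bijective phi /\ forall x y, e x y = f (phi x) (phi y).

Definition path_graph (n : nat) : rel 'I_n :=
  fun i j => (i.+1 == j :> nat) || (j.+1 == i :> nat).

Definition star_graph (t : nat) : rel (option 'I_t) :=
  fun a b => match a, b with
             | None, Some _ | Some _, None => true
             | _, _ => false
             end.

(* (partially) whiskered star: x_0 = None, x_i = Some (inl (i-1)) for 1<=i<=n,
   y_i = Some (inr (i-1)) for 1<=i<=m; edges x0--x_i and x_i--y_i. *)
Definition wstar_graph (n m : nat) : rel (option ('I_n + 'I_m)) :=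
  fun a b => match a, b with
             | None, Some (inl _) | Some (inl _), None => true
             | Some (inl i), Some (inr j) | Some (inr j), Some (inl i) =>
                 (val i == val j)
             | _, _ => false
             end.

Arguments path_graph n : clear implicits.
Arguments star_graph t : clear implicits.
Arguments wstar_graph n m : clear implicits.

From mathcomp Require Import all_boot zify.
Set Implicit Arguments. Unset Strict Implicit. Unset Printing Implicit Defensive.

(* In a tree, compl (square e) joins exactly the pairs of vertices at distance at
   least 3.  A path with five edges, two adjacent vertices of degree at least 3, or a
   vertex of degree at least 3 that is the end of a path with three edges each yield
   an induced 4-cycle in this graph.  Excluding them leaves a vertex g within
   distance 2 of every vertex and whose neighbours have degree at most 2: the tree is
   a star or a whiskered star, the paths L_2, ..., L_5 being among these.
   Conversely, for these trees all pairs at distance at least 3 meet a set of leaves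
   that are pairwise at distance at least 3, so the complement of the square is a
   split graph, hence chordal. *)

Section Chordal.
Variables (T : finType) (h : rel T).

Lemma split_chordal (P : pred T) :
  (forall x y, h x y -> P x || P y) ->
  (forall x y, P x -> P y -> x != y -> h x y) -> chordal h.
Proof.
move=> cover clique x0 c [uniq_c size_c hc].
have [k size_k] : exists k, size c = k.+4 by exists (size c - 4); lia.
have mod4 : (1 == 4 %% k.+4) = false by case: k size_k => // k; rewrite modn_small.
rewrite size_k in hc; set f := nth x0 c in hc.
have fP i j : i < k.+4 -> j < k.+4 -> i != j -> ~~ h (f i) (f j) -> ~~ (P (f i) && P (f j)).
  by move=> ? ? ij; apply: contra => /andP[Pi Pj]; apply: clique; rewrite // nth_uniq ?size_k.
have [e01 e12 e23] : [/\ h (f 0) (f 1), h (f 1) (f 2) & h (f 2) (f 3)].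
  by rewrite !hc // !modn_small.
have elast : h (f k.+3) (f 0) by rewrite hc // addn1 modnn.
have n02 : ~~ (P (f 0) && P (f 2)) by apply: (fP); rewrite // hc // !modn_small.
have n13 : ~~ (P (f 1) && P (f 3)).
  by apply: (fP); rewrite // hc // (@modn_small 2) // mod4.
have nlast1 : ~~ (P (f k.+3) && P (f 1)).
  by apply: (fP); rewrite // hc // addn1 modnn !modn_small.
(* f 1 and f 2 are forced into P; this excludes f 0 and then forces f k.+3 into P,
   although f k.+3 and f 1 are not adjacent. *)
move: (cover _ _ e01) (cover _ _ e12) (cover _ _ e23) (cover _ _ elast) n02 n13 nlast1.
by case: (P (f 0)); case: (P (f 1)); case: (P (f 2)); case: (P (f 3)); case: (P (f k.+3)).
Qed.

Lemma chordal_inj (U : finType) (h' : rel U) (phi : T -> U) :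
  injective phi -> (forall x y, h x y = h' (phi x) (phi y)) -> chordal h' -> chordal h.
Proof.
move=> phi_inj hh' ch' x0 c [uniq_c size_c hc]; apply: (ch' (phi x0) (map phi c)).
split; rewrite ?map_inj_uniq ?size_map // => i j ? ?.
by rewrite !(nth_map x0) // -hh' hc.
Qed.

Lemma chordal_C4 : irreflexive h -> symmetric h -> chordal h ->
  forall a b c d, h a b -> h b c -> h c d -> h d a -> ~~ h a c -> ~~ h b d ->
  a != c -> b != d -> False.
Proof.
move=> h_irr h_sym ch a b c d ab bc cd da ac bd nac nbd; apply: (ch a [:: a; b; c; d]).
have hneq x y : h x y -> x != y by apply: contraTneq => ->; rewrite h_irr.
split => //.
  by rewrite /= !inE !negb_or nac nbd (hneq a b) // (hneq b c) // (hneq c d) // eq_sym (hneq d a).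
have [ba cb dc ad] : [/\ h b a, h c b, h d c & h a d] by split; rewrite h_sym.
have [ca db] : h c a = false /\ h d b = false by split; apply/negbTE; rewrite h_sym.
by case=> [|[|[|[|i]]]] [|[|[|[|j]]]] //= _ _; rewrite ?h_irr ?(negbTE ac) ?(negbTE bd).
Qed.

End Chordal.

Lemma compl_square_bij (T U : finType) (e : rel T) (f : rel U) (phi : T -> U) :
  bijective phi -> (forall x y, e x y = f (phi x) (phi y)) ->
  forall x y, compl (square e) x y = compl (square f) (phi x) (phi y).
Proof.
case=> psi phiK psiK ef x y; rewrite /compl /square (bij_eq (Bijective phiK psiK)) ef.
congr (_ && ~~ (_ && (_ || _))); apply/existsP/existsP => [[z]|[w]].
  by exists (phi z); rewrite -!ef.
by exists (psi w); rewrite !ef psiK.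
Qed.

Lemma chordal_compl_square_iso (T U : finType) (e : rel T) (f : rel U) :
  isomorphic e f -> chordal (compl (square f)) -> chordal (compl (square e)).
Proof.
case=> phi [phi_bij ef]; apply: (chordal_inj (bij_inj phi_bij)).
exact: compl_square_bij.
Qed.

Lemma isomorphic_inj_onto (T U : finType) (e : rel T) (f : rel U) (psi : U -> T) :
  injective psi -> (forall x, x \in codom psi) ->
  (forall a b, f a b = e (psi a) (psi b)) -> isomorphic e f.
Proof.
move=> psi_inj psi_onto ef; exists (fun x => iinv (psi_onto x)); split.
  by exists psi => [x|a]; rewrite ?f_iinv ?iinv_f.
by move=> x y; rewrite ef !f_iinv.
Qed.

Lemma chordal_compl_square_star t : chordal (compl (square (star_graph t))).
Proof.
apply: (@split_chordal _ _ pred0) => // -[i|] [j|] //; rewrite /compl /square /=.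
by case: eqP => //= _ /negP[]; apply/existsP; exists None.
Qed.

Lemma chordal_compl_square_wstar n m : chordal (compl (square (wstar_graph n m))).
Proof.
pose leaf (a : option ('I_n + 'I_m)) := if a is Some (inr _) then true else false.
apply: (@split_chordal _ _ leaf) => [a b|].
  rewrite /compl /square; case: eqP => //= ab; apply: contraR.
  rewrite negb_or => /andP[]; case: a ab => [[i|i]|]; case: b => [[j|j]|] //= ab _ _.
  by apply/existsP; exists None.
case=> [[//|i]|//] [[//|j]|//] _ _ ij; rewrite /compl /square ij /=.
apply/existsP => -[[[k|k]|//]] //= /andP[/eqP ki /eqP kj].
by move: ij; rewrite (_ : i = j) ?eqxx //; apply: val_inj; rewrite /= -ki kj.
Qed.

Lemma path_graph_square n (i j : 'I_n) : i != j ->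
  [exists k, path_graph n i k && path_graph n k j] = (i.+2 == j :> nat) || (j.+2 == i :> nat).
Proof.
rewrite /path_graph -val_eqE /= => ij; apply/existsP/idP => [[k]|]; first by lia.
have [i_lt j_lt] := (ltn_ord i, ltn_ord j).
case/orP=> /eqP ji.
  have k_lt : i.+1 < n by lia.
  by exists (Ordinal k_lt); rewrite /=; lia.
have k_lt : j.+1 < n by lia.
by exists (Ordinal k_lt); rewrite /=; lia.
Qed.

Lemma compl_square_path n (i j : 'I_n) :
  compl (square (path_graph n)) i j = (i + 3 <= j) || (j + 3 <= i).
Proof.
rewrite /compl /square; case: (eqVneq i j) => [->|ij] /=; first by lia.
rewrite path_graph_square // /path_graph; move: ij; rewrite -val_eqE /=; lia.
Qed.

Lemma chordal_compl_square_path n : n <= 5 -> chordal (compl (square (path_graph n))).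
Proof.
move=> n_le5; pose P := [pred i : 'I_n | (i == 0 :> nat) || (i == 4 :> nat)].
apply: (@split_chordal _ _ P) => i j; rewrite compl_square_path /= -?val_eqE /=.
all: by have := ltn_ord i; have := ltn_ord j; lia.
Qed.

Fixpoint no_backtrack (T : eqType) (s : seq T) : bool :=
  match s with
  | a :: ((_ :: c :: _) as t) => (a != c) && no_backtrack t
  | _ => true
  end.

Section Tree.
Variables (V : finType) (e : rel V).
Hypotheses (e_sym : symmetric e) (e_irr : irreflexive e) (e_acyc : acyclic e).
Local Notation far := (compl (square e)).

Lemma path_chord x s z :
  path e x s -> uniq (x :: s) -> z \in s -> z != head x s -> ~~ e x z.
Proof.
move=> p_xs u_xs z_s; case/splitPr: z_s p_xs u_xs => s1 s2.
case: s1 => [|a s1]; first by rewrite /= eqxx.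
rewrite cat_path -cat_cons cat_uniq => /andP[p_s1 /andP[s1_z _]] /and3P[u_s1 /norP[z_s1 _] _] _.
apply/negP => xz; have := e_acyc (c := rcons (x :: a :: s1) z).
rewrite rcons_uniq z_s1 u_s1 size_rcons => /(_ isT isT)/negP; apply.
by move: p_s1 => /= /andP[xa a_s1]; rewrite /= !rcons_path xa a_s1 s1_z last_rcons e_sym.
Qed.

Lemma e_neq x y : e x y -> x != y.
Proof. by apply: contraTneq => ->; rewrite e_irr. Qed.

Lemma no_backtrack_uniq x s : path e x s -> no_backtrack (x :: s) -> uniq (x :: s).
Proof.
elim: s x => [|a s IH] x //; case: s IH => [|b s] IH.
  by rewrite /= inE !andbT => /e_neq.
move=> p_x nb_x; have [xa p_a] : e x a /\ path e a (b :: s) by apply/andP.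
have [xb nb_a] : x != b /\ no_backtrack [:: a, b & s] by apply/andP.
have u_a := IH a p_a nb_a.
rewrite cons_uniq u_a andbT inE negb_or e_neq //=; apply/negP => x_bs.
by move: (path_chord p_a u_a x_bs xb); rewrite e_sym xa.
Qed.

Lemma far_no_backtrack x s :
  path e x s -> no_backtrack (x :: s) -> 3 <= size s -> far x (last x s).
Proof.
move=> p_x nb_x; have u_x := no_backtrack_uniq p_x nb_x.
case: s p_x nb_x u_x => [|a [|b [|c s]]] // p_x _ u_x _; set l := last x _.
have l_cs : l \in c :: s := mem_last c s.
have l_s : l \in [:: a, b, c & s] by rewrite 2!inE l_cs !orbT.
move: (u_x) => /= /and4P[x_s a_s b_s _].
have [xa p_a] : e x a /\ path e a [:: b, c & s] by apply/andP.
have u_a : uniq [:: a, b, c & s] by case/andP: u_x.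
have x_l : x != l by apply: contraNneq x_s => ->.
have l_a : l != a by apply: contraNneq a_s => <-; rewrite inE l_cs orbT.
have l_b : l != b by apply: contraNneq b_s => <-.
rewrite /compl /square x_l /= negb_or (path_chord p_x u_x l_s) //=.
apply/existsP => -[z /andP[xz zl]]; case: (eqVneq z a) => [za|z_a].
  by move: (path_chord p_a u_a (z := l)); rewrite inE l_cs orbT -za zl => /(_ isT l_b).
have z_x : z != x by apply: contraTneq xz => ->; rewrite e_irr.
case: (boolP (z \in [:: a, b, c & s])) => z_s.
  by move: (path_chord p_x u_x z_s z_a); rewrite xz.
have p_xz : path e x (rcons [:: a, b, c & s] z) by rewrite rcons_path p_x e_sym.
have u_xz : uniq (x :: rcons [:: a, b, c & s] z).
  by rewrite -rcons_cons rcons_uniq inE negb_or z_x z_s.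
have z_xz : z \in rcons [:: a, b, c & s] z by rewrite mem_rcons mem_head.
by move: (path_chord p_xz u_xz z_xz z_a); rewrite xz.
Qed.

Lemma no_backtrack_open x s :
  path e x s -> no_backtrack (x :: s) -> 1 < size s -> ~~ e x (last x s).
Proof.
move=> p_x nb_x; have u_x := no_backtrack_uniq p_x nb_x.
case: s p_x nb_x u_x => [|a [|b s]] // p_x _ u_x _.
apply: (path_chord p_x u_x); first exact: (mem_last a (b :: s)).
by move: u_x => /= /and3P[_ + _]; apply: contraNneq => <-; apply: (mem_last b s).
Qed.

Lemma no_cycle3 a b c : e a b -> e b c -> ~~ e a c.
Proof.
move=> ab bc; case: (eqVneq a c) => [<-|ac]; first by rewrite e_irr.
by apply: (no_backtrack_open (s := [:: b; c])); rewrite /= ?ab ?bc ?ac.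
Qed.

Lemma no_cycle4 a b c d : e a b -> e b c -> e c d -> a != c -> b != d -> ~~ e a d.
Proof.
move=> ab bc cd ac bd.
by apply: (no_backtrack_open (s := [:: b; c; d])); rewrite /= ?ab ?bc ?cd ?ac ?bd.
Qed.

Lemma no_cycle5 a b c d f :
  e a b -> e b c -> e c d -> e d f -> a != c -> b != d -> c != f -> ~~ e a f.
Proof.
move=> ab bc cd df ac bd cf.
by apply: (no_backtrack_open (s := [:: b; c; d; f])); rewrite /= ?ab ?bc ?cd ?df ?ac ?bd ?cf.
Qed.

Lemma far_path3 a b c d : e a b -> e b c -> e c d -> a != c -> b != d -> far a d.
Proof.
move=> ab bc cd ac bd.
by apply: (far_no_backtrack (s := [:: b; c; d])); rewrite /= ?ab ?bc ?cd ?ac ?bd.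
Qed.

Lemma far_path4 a b c d f :
  e a b -> e b c -> e c d -> e d f -> a != c -> b != d -> c != f -> far a f.
Proof.
move=> ab bc cd df ac bd cf.
by apply: (far_no_backtrack (s := [:: b; c; d; f])); rewrite /= ?ab ?bc ?cd ?df ?ac ?bd ?cf.
Qed.

Lemma far_path5 a b c d f g : e a b -> e b c -> e c d -> e d f -> e f g ->
  a != c -> b != d -> c != f -> d != g -> far a g.
Proof.
move=> ab bc cd df fg ac bd cf dg.
apply: (far_no_backtrack (s := [:: b; c; d; f; g])) => //=.
  by rewrite ab bc cd df fg.
by rewrite ac bd cf dg.
Qed.

Lemma far_irr : irreflexive far.
Proof. by move=> x; rewrite /compl eqxx. Qed.

Lemma far_sym : symmetric far.
Proof.
move=> x y; rewrite /compl /square eq_sym e_sym; congr (_ && ~~ (_ && (_ || _))).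
by apply/existsP/existsP => -[z /andP[xz zy]]; exists z; rewrite e_sym zy e_sym.
Qed.

Lemma adj_not_far a b : e a b -> ~~ far a b.
Proof. by move=> ab; rewrite /compl /square ab orTb andbT andbN. Qed.

Lemma common_nbr_not_far a z b : e a z -> e z b -> ~~ far a b.
Proof.
move=> az zb; rewrite /compl /square negb_and !negbK.
by case: eqP => //= _; apply/orP; right; apply/existsP; exists z; rewrite az.
Qed.

Lemma not_farP a b : ~~ far a b -> [\/ a = b, e a b | exists2 z, e a z & e z b].
Proof.
rewrite /compl /square negb_and !negbK; case: eqVneq => [->|_ /=]; first by constructor 1.
by case/orP=> [|/existsP[z /andP[az zb]]]; [constructor 2 | constructor 3; exists z].
Qed.

Definition ball2 c := [set v | ~~ far c v].

Definition nbr_deg_le2 g :=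
  forall x y y', e g x -> e x y -> e x y' -> y != g -> y' != g -> y = y'.

Section CoChordal.
Hypothesis far_chordal : chordal far.

Lemma far_C4 a b c d : far a b -> far b c -> far c d -> far d a ->
  ~~ far a c -> ~~ far b d -> a != c -> b != d -> False.
Proof. exact: (chordal_C4 far_irr far_sym far_chordal). Qed.

Lemma no_path5 y x c q1 q2 q3 : e y x -> e x c -> e c q1 -> e q1 q2 -> e q2 q3 ->
  y != c -> x != q1 -> c != q2 -> q1 != q3 -> False.
Proof.
move=> yx xc cq1 q12 q23 yc xq1 cq2 q13.
apply: (@far_C4 y q2 x q3).
- exact: far_path4 yx xc cq1 q12 yc xq1 cq2.
- by rewrite far_sym; apply: far_path3 xc cq1 q12 xq1 cq2.
- exact: far_path4 xc cq1 q12 q23 xq1 cq2 q13.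
- by rewrite far_sym; apply: far_path5 yx xc cq1 q12 q23 yc xq1 cq2 q13.
- exact: adj_not_far.
- exact: adj_not_far.
- exact: e_neq yx.
- exact: e_neq q23.
Qed.

Lemma no_adjacent_forks c x y y' a b :
  e c x -> e x y -> e x y' -> y != c -> y' != c -> y != y' ->
  e c a -> e c b -> a != x -> b != x -> a != b -> False.
Proof.
move=> cx xy xy' yc y'c yy' ca cb ax bx ab; rewrite eq_sym in ax; rewrite eq_sym in bx.
have [xc yx y'x] : [/\ e x c, e y x & e y' x] by split; rewrite e_sym.
apply: (@far_C4 y a y' b) => //.
- exact: far_path3 yx xc ca yc ax.
- by rewrite far_sym; apply: far_path3 y'x xc ca y'c ax.
- exact: far_path3 y'x xc cb y'c bx.
- by rewrite far_sym; apply: far_path3 yx xc cb yc bx.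
- exact: common_nbr_not_far yx xy'.
- by rewrite e_sym in ca; apply: common_nbr_not_far ca cb.
Qed.

Lemma no_fork_long_leg c x y y' z v :
  e c x -> e x y -> e x y' -> y != c -> y' != c -> y != y' ->
  e c z -> z != x -> e z v -> v != c -> False.
Proof.
move=> cx xy xy' yc y'c yy' cz zx zv vc; rewrite eq_sym in zx; rewrite eq_sym in vc.
have [xc yx y'x] : [/\ e x c, e y x & e y' x] by split; rewrite e_sym.
apply: (@far_C4 y v y' z) => //.
- exact: far_path4 yx xc cz zv yc zx vc.
- by rewrite far_sym; apply: far_path4 y'x xc cz zv y'c zx vc.
- exact: far_path3 y'x xc cz y'c zx.
- by rewrite far_sym; apply: far_path3 yx xc cz yc zx.
- exact: common_nbr_not_far yx xy'.
- by rewrite far_sym; apply: adj_not_far.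
- by rewrite eq_sym e_neq.
Qed.

Lemma ball2_proper c q1 q2 q3 : e c q1 -> e q1 q2 -> e q2 q3 -> c != q2 -> q1 != q3 ->
  ball2 c \proper ball2 q1.
Proof.
move=> cq1 q12 q23 cq2 q13; apply/properP; split.
  apply/subsetP => v; rewrite !inE => /not_farP[<-|cv|[z cz zv]].
  - by apply: adj_not_far; rewrite e_sym.
  - by apply: (common_nbr_not_far (z := c)); rewrite // e_sym.
  case: (eqVneq z q1) => [<-|zq1]; first exact: adj_not_far.
  case: (eqVneq v c) => [->|vc]; first by apply: adj_not_far; rewrite e_sym.
  by rewrite e_sym in cz; rewrite e_sym in zv; case: (no_path5 zv cz cq1 q12 q23 vc zq1 cq2 q13).
exists q3; rewrite !inE ?negbK; first exact: common_nbr_not_far q12 q23.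
exact: far_path3 cq1 q12 q23 cq2 q13.
Qed.

Lemma radius2_center (v0 : V) : connected e -> exists c, forall v, ~~ far c v.
Proof.
move=> e_conn; have [c _ c_max] := @arg_maxnP V v0 predT (fun c => #|ball2 c|) isT.
exists c => w; apply/negP => cw; case/connectP: (e_conn c w) => p p_c w_last.
rewrite {w}w_last in cw; case/shortenP: p_c cw => -[|q1 [|q2 [|q3 r]]] /= p_c u_c _.
- by rewrite far_irr.
- by apply/negP; apply: adj_not_far; case/andP: p_c.
- by apply/negP; case/and3P: p_c => cq1 q12 _; apply: common_nbr_not_far cq1 q12.
move=> _; case/and4P: p_c => cq1 q12 q23 _.
have [cq2 q13] : c != q2 /\ q1 != q3.
  by move: u_c; rewrite /= !inE !negb_or => /and4P[/and4P[_ -> _ _] /and3P[_ -> _] _ _].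
have q1_le_c : #|ball2 q1| <= #|ball2 c| := c_max q1 isT.
suff : #|ball2 c| < #|ball2 q1| by rewrite ltnNge q1_le_c.
exact: proper_card (ball2_proper cq1 q12 q23 cq2 q13).
Qed.

Section Fork.
Variables (c x y y' : V).
Hypotheses (c_rad : forall v, ~~ far c v) (cx : e c x) (xy : e x y) (xy' : e x y').
Hypotheses (yc : y != c) (y'c : y' != c) (yy' : y != y').

Lemma fork_radius2 v : ~~ far x v.
Proof.
case/not_farP: (c_rad v) => [<-|cv|[z cz zv]].
- by apply: adj_not_far; rewrite e_sym.
- by apply: (common_nbr_not_far (z := c)); rewrite // e_sym.
case: (eqVneq z x) => [<-|zx]; first exact: adj_not_far.
case: (eqVneq v c) => [->|vc]; first by apply: adj_not_far; rewrite e_sym.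
by case: (no_fork_long_leg cx xy xy' yc y'c yy' cz zx zv vc).
Qed.

Lemma fork_nbr_deg_le2 : nbr_deg_le2 x.
Proof.
move=> u a b xu ua ub ax bx; case: (eqVneq u c) => [uc|uc].
  rewrite {u}uc in ua ub {xu}; case: (eqVneq a b) => // ab.
  by case: (no_adjacent_forks cx xy xy' yc y'c yy' ua ub ax bx ab).
by have := c_rad a; rewrite (far_path3 cx xu ua) // eq_sym.
Qed.

End Fork.

Lemma nbr_deg_le2_center c : (forall v, ~~ far c v) ->
  exists g, (forall v, ~~ far g v) /\ nbr_deg_le2 g.
Proof.
move=> c_rad.
pose fork (t : V * V * V) := let: (x, y, y') := t in
  [&& e c x, e x y, e x y' & [&& y != c, y' != c & y != y']].
case: (pickP fork) => [[[x y] y'] /and4P[cx xy xy' /and3P[yc y'c yy']]|no_fork].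
  exists x; split; first exact: fork_radius2 c_rad cx xy xy' yc y'c yy'.
  exact: fork_nbr_deg_le2 c_rad cx xy xy' yc y'c yy'.
exists c; split => // x y y' cx xy xy' yc y'c; apply/eqP; apply: contraFT (no_fork (x, y, y')).
by move=> yy'; rewrite /= cx xy xy' yc y'c yy'.
Qed.

End CoChordal.

Section Models.
Variable g : V.
Hypotheses (g_rad : forall v, ~~ far g v) (g_deg : nbr_deg_le2 g).

(* The neighbour of x other than g, or g itself if there is none. *)
Definition child x := odflt g [pick y | e x y && (y != g)].

Lemma child_eq x y : e g x -> e x y -> y != g -> child x = y.
Proof.
move=> gx xy yg; rewrite /child; case: pickP => [z /andP[xz zg]|/(_ y)] /=.
  exact: g_deg gx xz xy zg yg.
by rewrite xy yg.
Qed.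

Lemma child_adj x : child x != g -> e x (child x).
Proof. by rewrite /child; case: pickP => [z /andP[]|] //=; rewrite eqxx. Qed.

Definition whiskered := [set x | e g x & child x != g].
Definition bare := [set x | e g x & child x == g].

Lemma child_not_adj x : x \in whiskered -> ~~ e g (child x).
Proof. by rewrite inE => /andP[gx /child_adj]; apply: no_cycle3. Qed.

Lemma child_neq x : x \in whiskered -> child x != g.
Proof. by rewrite inE => /andP[]. Qed.

Lemma whiskered_adj x : x \in whiskered -> e g x.
Proof. by rewrite inE => /andP[]. Qed.

Lemma nbr_adj_child x y : e g y -> x \in whiskered -> e y (child x) = (y == x).
Proof.
move=> gy wx; case: eqVneq => [->|yx]; first exact/child_adj/child_neq.
apply/negbTE; apply: contraTN gy => y_cx.
by rewrite e_sym in y_cx; apply: no_cycle4 (whiskered_adj wx) (child_adj (child_neq wx)) y_cx _ _;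
  rewrite 1?eq_sym ?child_neq.
Qed.

Lemma child_inj : {in whiskered &, injective child}.
Proof.
move=> x y wx wy cxy; apply/eqP; rewrite -(nbr_adj_child (whiskered_adj wx) wy) -cxy.
exact/child_adj/child_neq.
Qed.

Lemma child_child_nadj x y : x \in whiskered -> y \in whiskered -> ~~ e (child x) (child y).
Proof.
move=> wx wy; case: (eqVneq x y) => [->|xy]; first by rewrite e_irr.
apply: contraTN (whiskered_adj wy) => cxy.
apply: (no_cycle5 (whiskered_adj wx) (child_adj (child_neq wx)) cxy).
- by rewrite e_sym; apply/child_adj/child_neq.
- by rewrite eq_sym child_neq.
- by apply: contraTneq (whiskered_adj wx) => ->; apply: child_not_adj.
by apply: contraTneq (whiskered_adj wy) => <-; apply: child_not_adj.
Qed.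

Lemma parent_exists v : v != g -> ~~ e g v -> exists2 x, x \in whiskered & child x = v.
Proof.
move=> vg gv; case/not_farP: (g_rad v) => [gv'|gv'|[x gx xv]].
- by rewrite gv' eqxx in vg.
- by rewrite gv' in gv.
by exists x; rewrite ?inE ?gx (child_eq gx xv vg).
Qed.

Lemma star_model : whiskered = set0 -> (exists v, v != g) ->
  exists t, 1 <= t /\ isomorphic e (star_graph t).
Proof.
move=> no_whisker [v vg].
have bare_adj u : u \in bare -> e g u by rewrite inE => /andP[].
have bareP u : u != g -> u \in bare.
  move=> ug; case: (boolP (e g u)) => [gu|ngu].
    rewrite inE gu /=; apply: contraT => cu.
    suff : u \in whiskered by rewrite no_whisker inE.
    by rewrite inE gu cu.
  by case: (parent_exists ug ngu) => x; rewrite no_whisker inE.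
exists #|bare|; split; first by apply/card_gt0P; exists v; apply: bareP.
pose psi (o : option 'I_#|bare|) := if o is Some i then enum_val i else g.
have psi_g i : psi (Some i) != g.
  by apply: contraTneq (bare_adj _ (enum_valP i)) => /= ->; rewrite e_irr.
apply: (@isomorphic_inj_onto _ _ _ _ psi).
- case=> [i|] [j|] // eq_ij; first by rewrite (enum_val_inj eq_ij).
    by move: (psi_g i); rewrite eq_ij eqxx.
  by move: (psi_g j); rewrite -eq_ij eqxx.
- move=> u; apply/codomP; case: (eqVneq u g) => [->|ug]; first by exists None.
  by exists (Some (enum_rank_in (bareP _ ug) u)); rewrite /= enum_rankK_in // bareP.
case=> [i|] [j|] /=; rewrite ?e_irr // ?(e_sym _ g) ?bare_adj ?enum_valP //.
apply/esym/negbTE; apply: contraTN (bare_adj _ (enum_valP j)).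
exact: no_cycle3 (bare_adj _ (enum_valP i)).
Qed.

(* The neighbours of g, whiskered ones first, so that the whisker of nbr_val j is
   child (enum_val j) for j < #|whiskered|, as in wstar_graph. *)
Definition nbr_val (i : 'I_(#|whiskered| + #|bare|)) : V :=
  match split i with inl a => enum_val a | inr b => enum_val b end.

Lemma nbr_val_adj i : e g (nbr_val i).
Proof. by rewrite /nbr_val; case: split => a; have := enum_valP a; rewrite inE => /andP[]. Qed.

Lemma nbr_val_inj : injective nbr_val.
Proof.
move=> i j; rewrite /nbr_val -{2}(splitK i) -{2}(splitK j).
case: split => a; case: split => b eq_ab; rewrite ?(enum_val_inj eq_ab) //.
all: by move: (enum_valP a) (enum_valP b); rewrite !inE eq_ab => /andP[_ +] /andP[_]; case: eqP.
Qed.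

Lemma nbr_val_onto v : e g v -> exists i, nbr_val i = v.
Proof.
move=> gv; case: (boolP (v \in whiskered)) => wv.
  by exists (unsplit (inl (enum_rank_in wv v))); rewrite /nbr_val unsplitK enum_rankK_in.
have bv : v \in bare by move: wv; rewrite !inE gv negbK.
by exists (unsplit (inr (enum_rank_in bv v))); rewrite /nbr_val unsplitK enum_rankK_in.
Qed.

Lemma nbr_val_adj_child i (j : 'I_#|whiskered|) :
  e (nbr_val i) (child (enum_val j)) = (i == j :> nat).
Proof.
rewrite nbr_adj_child ?nbr_val_adj ?enum_valP // /nbr_val; case: splitP => [a ->|b ->].
  by rewrite (inj_eq enum_val_inj).
have := enum_valP b; have := enum_valP j; rewrite !inE => /andP[_ cj] /andP[_].
move=> cb; have -> : (#|whiskered| + b == j) = false by have := ltn_ord j; lia.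
by apply/negbTE; apply: contraTneq cb => ->.
Qed.

Lemma wstar_model : whiskered != set0 ->
  exists n m, [/\ 1 <= n, 1 <= m, m <= n & isomorphic e (wstar_graph n m)].
Proof.
rewrite -card_gt0 => m_gt0; exists (#|whiskered| + #|bare|), #|whiskered|.
split; rewrite ?leq_addr ?(leq_trans m_gt0 (leq_addr _ _)) //.
pose psi (o : option ('I_(#|whiskered| + #|bare|) + 'I_#|whiskered|)) :=
  match o with None => g | Some (inl i) => nbr_val i | Some (inr j) => child (enum_val j) end.
have [nbr_g leaf_g] := (nbr_val_adj, fun j => child_not_adj (enum_valP j)).
apply: (@isomorphic_inj_onto _ _ _ _ psi).
- case=> [[i|j]|] [[i'|j']|] //= eq_psi.
  + by rewrite (nbr_val_inj eq_psi).
  + by move: (nbr_g i); rewrite eq_psi (negbTE (leaf_g j')).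
  + by move: (nbr_g i); rewrite eq_psi e_irr.
  + by move: (nbr_g i'); rewrite -eq_psi (negbTE (leaf_g j)).
  + by rewrite (enum_val_inj (child_inj (enum_valP j) (enum_valP j') eq_psi)).
  + by move: (child_neq (enum_valP j)); rewrite eq_psi eqxx.
  + by move: (nbr_g i'); rewrite -eq_psi e_irr.
  + by move: (child_neq (enum_valP j')); rewrite -eq_psi eqxx.
- move=> u; apply/codomP; case: (eqVneq u g) => [->|ug]; first by exists None.
  case: (boolP (e g u)) => [/nbr_val_onto[i <-]|gu]; first by exists (Some (inl i)).
  case: (parent_exists ug gu) => x wx <-.
  by exists (Some (inr (enum_rank_in wx x))); rewrite /= enum_rankK_in.
case=> [[i|j]|] [[i'|j']|] /=.
- by apply/esym/negbTE; apply: contraTN (nbr_g i'); apply: no_cycle3.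
- exact/esym/nbr_val_adj_child.
- by rewrite e_sym nbr_g.
- by rewrite e_sym nbr_val_adj_child.
- by apply/esym/negbTE/child_child_nadj; apply: enum_valP.
- by rewrite e_sym (negbTE (leaf_g j)).
- by rewrite nbr_g.
- by rewrite (negbTE (leaf_g j')).
by rewrite e_irr.
Qed.

End Models.

End Tree.

Theorem corollary3p12 (V : finType) (e : rel V) :
  is_tree e -> 2 <= #|V| ->
  (chordal (compl (square e)) <->
   [\/ exists n, 2 <= n <= 5 /\ isomorphic e (path_graph n),
       exists t, 1 <= t /\ isomorphic e (star_graph t)
     | exists n m, [/\ 1 <= n, 1 <= m, m <= n & isomorphic e (wstar_graph n m)]]).
Proof.
move=> [[e_sym e_irr] [e_conn e_acyc]] /card_gt1P[v0 [v1 [_ _ v01]]]; split=> [far_chordal|].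
  have [c c_rad] := radius2_center e_sym e_irr e_acyc far_chordal v0 e_conn.
  have [g [g_rad g_deg]] := nbr_deg_le2_center e_sym e_irr e_acyc far_chordal c_rad.
  have [no_whisker|some_whisker] := eqVneq (whiskered e g) set0; last first.
    exact: Or33 (wstar_model e_sym e_irr e_acyc g_rad g_deg some_whisker).
  apply: Or32; apply: (star_model e_sym e_irr e_acyc g_rad g_deg no_whisker).
  by case: (eqVneq v0 g) => [<-|v0g]; [exists v1; rewrite eq_sym | exists v0].
case=> [[n [/andP[_ n_le5] iso]]|[t [_ iso]]|[n [m [_ _ _ iso]]]].
- exact: (chordal_compl_square_iso iso (chordal_compl_square_path n_le5)).
- exact: (chordal_compl_square_iso iso (@chordal_compl_square_star t)).
exact: (chordal_compl_square_iso iso (@chordal_compl_square_wstar n m)).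
Qed.
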